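(* Let $(b,c)$ be a connected weighted graph over $X$. The following are equivalent: (i) $(b,c)$ is canonically compactifiable; (ii) $\sup_{x,y\in X}\varrho(x,y)<\infty$; (iii) $\sup_{x,y\in X}r(x,y)<\infty$. If $c\equiv0$, these are moreover equivalent to: (iv) $\sup_{x,y\in X}\sigma(x,y)<\infty$ for every pseudometric $\sigma$ on $X$ that is intrinsic with respect to some measure $m$ on $X$ with $m(X)<\infty$.
   Context: Let $X$ be a countably infinite set. A weighted graph $(b,c)$ over $X$ consists of a symmetric $b:X\times X\to[0,\infty)$ with $b(x,x)=0$ and $\sum_{y}b(x,y)<\infty$ for all $x$, and $c:X\to[0,\infty)$. A path is a finite sequence of pairwise distinct vertices with $b(x_{i-1},x_i)>0$; connected means any two distinct vertices are joined by a path. For $f:X\to\mathbb C$ let $\widetilde Q(f)=\frac12\sum_{x,y}b(x,y)|f(x)-f(y)|^2+\sum_x c(x)|f(x)|^2\in[0,\infty]$ and $\widetilde D=\{f:\widetilde Q(f)<\infty\}$. The graph is called canonically compactifiable if $\widetilde D\subseteq\ell^\infty(X)$, i.e. every function of finite energy is bounded. Define $\varrho(x,y)=\sup\{|f(x)-f(y)|:f\in\widetilde D,\ \widetilde Q(f)\le1\}$, and $r(x,x)=0$, $r(x,y)=\sup\{1/\widetilde Q(g):g\in\widetilde D,\ |g(x)-g(y)|=1\}$ for $x\neq y$. A measure on $X$ is $m:X\to[0,\infty)$ with $m(A)=\sum_{x\in A}m(x)$; a pseudometric $\sigma$ is intrinsic with respect to $m$ if $\frac12\sum_y b(x,y)\sigma(x,y)^2\le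 m(x)$ for all $x$. *)

From Stdlib Require Import Reals Lra List.
Import ListNotations.
Open Scope R_scope.

(* Complex numbers represented as pairs (real part, imaginary part). *)
Definition C := (R * R)%type.
Definition Csub (z w : C) : C := (fst z - fst w, snd z - snd w).
Definition Cabs2 (z : C) : R := fst z * fst z + snd z * snd z.
Definition Cabs (z : C) : R := sqrt (Cabs2 z).

Section Graphs.
Context {X : Type}.

Definition countably_infinite (T : Type) : Prop :=
  exists e : nat -> T, (forall n m, e n = e m -> n = m) /\ (forall x, exists n, e n = x).

Definition lsum (l : list X) (g : X -> R) : R := fold_right (fun x s => g x + s) 0 l.

Definition weighted_graph (b : X -> X -> R) (c : X -> R) : Prop :=
  (forall x y, 0 <= b x y) /\ (forall x y, b x y = b y x) /\ (forall x, b x x = 0) /\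
  (* sum_y b(x,y) < infinity : bounded partial sums over finite sets of distinct vertices *)
  (forall x, exists M, forall l, NoDup l -> lsum l (fun y => b x y) <= M) /\
  (forall x, 0 <= c x).

Fixpoint chain (b : X -> X -> R) (x : X) (l : list X) : Prop :=
  match l with
  | [] => True
  | y :: l' => 0 < b x y /\ chain b y l'
  end.

Definition is_path (b : X -> X -> R) (x y : X) (p : list X) : Prop :=
  NoDup (x :: p) /\ chain b x p /\ last (x :: p) x = y.

Definition connected (b : X -> X -> R) : Prop :=
  forall x y, x <> y -> exists p, is_path b x y p.

Definition Qfin (b : X -> X -> R) (c : X -> R) (l : list X) (f : X -> C) : R :=
  / 2 * lsum l (fun x => lsum l (fun y => b x y * Cabs2 (Csub (f x) (f y))))
  + lsum l (fun x => c x * Cabs2 (f x)).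

(* Qval b c f q : Q~(f) is finite and equals q (supremum of the finite partial sums,
   all terms being nonnegative). *)
Definition Qval (b : X -> X -> R) (c : X -> R) (f : X -> C) (q : R) : Prop :=
  is_lub (fun v => exists l, NoDup l /\ v = Qfin b c l f) q.

Definition inD (b : X -> X -> R) (c : X -> R) (f : X -> C) : Prop := exists q, Qval b c f q.

Definition canonically_compactifiable (b : X -> X -> R) (c : X -> R) : Prop :=
  forall f, inD b c f -> exists M, forall x, Cabs (f x) <= M.

Definition rho_le (b : X -> X -> R) (c : X -> R) (x y : X) (K : R) : Prop :=
  forall f q, Qval b c f q -> q <= 1 -> Cabs (Csub (f x) (f y)) <= K.

(* r(x,y) <= K ; r(x,x) = 0, and 1/Q~(g) = +infinity when Q~(g) = 0 *)
Definition r_le (b : X -> X -> R) (c : X -> R) (x y : X) (K : R) : Prop :=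
  (x = y -> 0 <= K) /\
  (x <> y -> forall g q, Qval b c g q -> Cabs (Csub (g x) (g y)) = 1 -> 0 < q /\ / q <= K).

Definition pseudometric (s : X -> X -> R) : Prop :=
  (forall x y, 0 <= s x y) /\ (forall x, s x x = 0) /\ (forall x y, s x y = s y x) /\
  (forall x y z, s x z <= s x y + s y z).

Definition measure (m : X -> R) : Prop := forall x, 0 <= m x.

Definition finite_measure (m : X -> R) : Prop :=
  exists M, forall l, NoDup l -> lsum l m <= M.

Definition intrinsic (b : X -> X -> R) (m : X -> R) (s : X -> X -> R) : Prop :=
  forall x l, NoDup l -> / 2 * lsum l (fun y => b x y * (s x y) ^ 2) <= m x.

End Graphs.

(* The energy of a complex
   function is the sum of the energies of its real and imaginary parts, so the
   argument mostly deals with real functions and their energy [Qre].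

   - (ii) <-> (iii) and (ii) -> (i) follow from homogeneity, Q(t f) = t^2 Q(f):
     a bound rho <= K yields |f x - f y| <= K sqrt(Q f), and a bound r <= K
     yields |f x - f y|^2 <= K Q(f).
   - (i) -> (ii): if rho is unbounded there are nonnegative unit-energy
     functions w_n, bounded at a base point, with w_n(z_n) > 2^(n+1) n.  By
     connectedness (edge bounds summed along paths) the series
     sum_n 2^-(n+1) w_n converges pointwise; convexity of the energy (Jensen)
     and its continuity under pointwise limits give the sum energy at most one,
     yet the sum is unbounded.
   - (i) <-> (iv) when c = 0: the distance to a point for an intrinsic metric
     has energy at most m(X); conversely a real u of finite energy gives the
     intrinsic metric |u x - u y| for the finite measure
     m(x) = 1/2 sum_y b(x,y) (u x - u y)^2, the sums being computed as monotone
     limits along an enumeration of X. *)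

From Pilot Require Import Defs.
From Stdlib Require Import Reals List Lra Lia Classical ClassicalEpsilon.
Import ListNotations.
Open Scope R_scope.

Lemma Un_cv_const (a : R) : Un_cv (fun _ => a) a.
Proof. intros eps He. exists O. intros. unfold R_dist. rewrite Rminus_diag, Rabs_R0. lra. Qed.

Lemma Un_cv_le_bound (u : nat -> R) (l M : R) : (forall n, u n <= M) -> Un_cv u l -> l <= M.
Proof. intros Hu Hl. eapply Rle_cv_lim; [exact Hu | exact Hl | apply Un_cv_const]. Qed.

Section FiniteSums.
Context {X : Type}.

Lemma lsum_ext (l : list X) (g h : X -> R) :
  (forall x, In x l -> g x = h x) -> lsum l g = lsum l h.
Proof.
  induction l as [|a l IH]; intros H; simpl; auto.
  rewrite (H a (or_introl eq_refl)), IH; auto.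
  intros x Hx; apply H; right; auto.
Qed.

Lemma lsum_le (l : list X) (g h : X -> R) :
  (forall x, In x l -> g x <= h x) -> lsum l g <= lsum l h.
Proof.
  induction l as [|a l IH]; intros H; simpl; [lra|].
  assert (g a <= h a) by (apply H; left; auto).
  assert (lsum l g <= lsum l h) by (apply IH; intros; apply H; right; auto).
  lra.
Qed.

Lemma lsum_zero (l : list X) : lsum l (fun _ => 0) = 0.
Proof. induction l; simpl; lra. Qed.

Lemma lsum_nonneg (l : list X) (g : X -> R) :
  (forall x, In x l -> 0 <= g x) -> 0 <= lsum l g.
Proof. intros H. rewrite <- (lsum_zero l). apply lsum_le; auto. Qed.

Lemma lsum_scal (l : list X) (g : X -> R) k :
  lsum l (fun x => k * g x) = k * lsum l g.
Proof. induction l; simpl; [ring|]. rewrite IHl; ring. Qed.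

Lemma lsum_plus (l : list X) (g h : X -> R) :
  lsum l (fun x => g x + h x) = lsum l g + lsum l h.
Proof. induction l; simpl; [ring|]. rewrite IHl; ring. Qed.

Lemma lsum_sum_f (l : list X) (a : nat -> R) (g : nat -> X -> R) N :
  sum_f_R0 (fun n => a n * lsum l (g n)) N
  = lsum l (fun x => sum_f_R0 (fun n => a n * g n x) N).
Proof.
  induction N; simpl.
  - rewrite lsum_scal. reflexivity.
  - rewrite IHN, lsum_plus, lsum_scal. reflexivity.
Qed.

Lemma lsum_term_le (l : list X) (g : X -> R) a :
  In a l -> (forall x, In x l -> 0 <= g x) -> g a <= lsum l g.
Proof.
  induction l as [|y l IH]; intros Ha H; simpl in *; [contradiction|].
  destruct Ha as [->|Ha].
  - assert (0 <= lsum l g) by (apply lsum_nonneg; auto). lra.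
  - assert (g a <= lsum l g) by (apply IH; auto). assert (0 <= g y) by auto. lra.
Qed.

Lemma lsum_incl (l L : list X) (g : X -> R) :
  (forall x, 0 <= g x) -> NoDup l -> incl l L -> lsum l g <= lsum L g.
Proof.
  intros Hg. revert L. induction l as [|a l IH]; intros L Hnd Hinc; simpl.
  - apply lsum_nonneg; auto.
  - apply NoDup_cons_iff in Hnd as [Hna Hnd].
    destruct (in_split a L (Hinc a (or_introl eq_refl))) as [L1 [L2 ->]].
    assert (Hsplit : forall h : X -> R, lsum (L1 ++ a :: L2) h = h a + lsum (L1 ++ L2) h).
    { intros h. clear Hinc. induction L1 as [|z L1 IH1]; simpl; [ring|]. rewrite IH1. ring. }
    rewrite Hsplit. apply Rplus_le_compat_l. apply IH; auto.
    intros x Hx. assert (Hx' := Hinc x (or_intror Hx)).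
    rewrite in_app_iff in *. destruct Hx' as [|[<-|]]; auto. contradiction.
Qed.

Lemma lsum_cv (l : list X) (g : nat -> X -> R) (G : X -> R) :
  (forall x, Un_cv (fun N => g N x) (G x)) -> Un_cv (fun N => lsum l (g N)) (lsum l G).
Proof.
  intros H. induction l as [|a l IH]; simpl.
  - apply Un_cv_const.
  - apply CV_plus; auto.
Qed.

Lemma monotone_limit (g : nat -> X -> R) :
  (forall x, Un_growing (fun N => g N x)) -> (forall x, has_ub (fun N => g N x)) ->
  exists G : X -> R, forall x, Un_cv (fun N => g N x) (G x).
Proof.
  intros Hgrow Hub. apply (choice (fun x L => Un_cv (fun N => g N x) L)).
  intros x. destruct (growing_cv _ (Hgrow x) (Hub x)) as [L HL]. eauto.
Qed.

End FiniteSums.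

Lemma Cabs_le_sum (z : Defs.C) : Cabs z <= Rabs (fst z) + Rabs (snd z).
Proof.
  unfold Cabs, Cabs2.
  rewrite <- (sqrt_Rsqr (Rabs (fst z) + Rabs (snd z)))
    by (pose proof (Rabs_pos (fst z)); pose proof (Rabs_pos (snd z)); lra).
  apply sqrt_le_1_alt.
  pose proof (Rsqr_abs (fst z)); pose proof (Rsqr_abs (snd z)).
  pose proof (Rabs_pos (fst z)); pose proof (Rabs_pos (snd z)).
  unfold Rsqr in *. nra.
Qed.

Lemma Cabs_ge_components (z : Defs.C) : Rabs (fst z) <= Cabs z /\ Rabs (snd z) <= Cabs z.
Proof.
  unfold Cabs, Cabs2. rewrite <- !sqrt_Rsqr_abs.
  split; apply sqrt_le_1_alt; pose proof (Rle_0_sqr (fst z)); pose proof (Rle_0_sqr (snd z));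
    unfold Rsqr in *; lra.
Qed.

Lemma Cabs_real (a : R) : Cabs (a, 0) = Rabs a.
Proof.
  unfold Cabs, Cabs2; simpl. rewrite <- sqrt_Rsqr_abs. unfold Rsqr. f_equal; ring.
Qed.

Lemma Cabs_scale (t : R) (z : Defs.C) : Cabs (t * fst z, t * snd z) = Rabs t * Cabs z.
Proof.
  unfold Cabs, Cabs2; simpl.
  replace (t * fst z * (t * fst z) + t * snd z * (t * snd z))
    with (t² * (fst z * fst z + snd z * snd z)) by (unfold Rsqr; ring).
  rewrite sqrt_mult by (try apply Rle_0_sqr; nra).
  rewrite sqrt_Rsqr_abs. reflexivity.
Qed.

Definition emb {X : Type} (u : X -> R) : X -> Defs.C := fun x => (u x, 0).
Definition scale {X : Type} (t : R) (f : X -> Defs.C) : X -> Defs.C :=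
  fun x => (t * fst (f x), t * snd (f x)).

Lemma Cabs_sub_scale {X : Type} (t : R) (f : X -> Defs.C) (x y : X) :
  Cabs (Csub (scale t f x) (scale t f y)) = Rabs t * Cabs (Csub (f x) (f y)).
Proof.
  rewrite <- Cabs_scale. unfold Csub, scale; simpl. f_equal; f_equal; ring.
Qed.

Section Energy.
Context {X : Type} (b : X -> X -> R) (c : X -> R).

Definition Qre (l : list X) (u : X -> R) : R :=
  / 2 * lsum l (fun x => lsum l (fun y => b x y * (u x - u y)²))
  + lsum l (fun x => c x * (u x)²).

Definition energy_le (u : X -> R) (M : R) : Prop :=
  forall l, NoDup l -> Qre l u <= M.

Lemma Qfin_split (l : list X) (f : X -> Defs.C) :
  Qfin b c l f = Qre l (fun x => fst (f x)) + Qre l (fun x => snd (f x)).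
Proof.
  unfold Qfin, Qre.
  transitivity (/ 2 * lsum l (fun x => lsum l (fun y => b x y * (fst (f x) - fst (f y))²)
                  + lsum l (fun y => b x y * (snd (f x) - snd (f y))²))
                + lsum l (fun x => c x * (fst (f x))² + c x * (snd (f x))²)).
  - f_equal; [f_equal|]; apply lsum_ext; intros x _;
      [rewrite <- lsum_plus; apply lsum_ext; intros y _|];
      unfold Cabs2, Csub, Rsqr; simpl; ring.
  - rewrite !lsum_plus. ring.
Qed.

Lemma Qfin_emb (l : list X) (u : X -> R) : Qfin b c l (emb u) = Qre l u.
Proof.
  rewrite Qfin_split. change (Qre l u + Qre l (fun _ => 0) = Qre l u).
  unfold Qre at 2.
  rewrite (lsum_ext l (fun x => lsum l _) (fun _ => 0)), (lsum_ext l (fun x => c x * _) (fun _ => 0)).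
  - rewrite !lsum_zero. ring.
  - intros; unfold Rsqr; ring.
  - intros; rewrite (lsum_ext l _ (fun _ => 0)), lsum_zero; auto. intros; unfold Rsqr; ring.
Qed.

Lemma Qre_scale (l : list X) (u : X -> R) (t : R) :
  Qre l (fun x => t * u x) = t² * Qre l u.
Proof.
  unfold Qre.
  rewrite (lsum_ext l (fun x => lsum l _) (fun x => t² * lsum l (fun y => b x y * (u x - u y)²))).
  - rewrite (lsum_ext l (fun x => c x * _) (fun x => t² * (c x * (u x)²))).
    + rewrite !lsum_scal. ring.
    + intros; unfold Rsqr; ring.
  - intros x _. rewrite <- lsum_scal. apply lsum_ext. intros; unfold Rsqr; ring.
Qed.

Lemma Qfin_scale (l : list X) (f : X -> Defs.C) (t : R) :
  Qfin b c l (scale t f) = t² * Qfin b c l f.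
Proof. rewrite !Qfin_split. unfold scale; simpl. rewrite !Qre_scale. ring. Qed.

Lemma Qval_ub (f : X -> Defs.C) (q : R) (l : list X) :
  Qval b c f q -> NoDup l -> Qfin b c l f <= q.
Proof. intros [H _] Hl. apply H. exists l; auto. Qed.

Lemma Qval_nonneg (f : X -> Defs.C) (q : R) : Qval b c f q -> 0 <= q.
Proof.
  intros H. replace 0 with (Qfin b c [] f) by (unfold Qfin; simpl; ring).
  apply Qval_ub; [exact H | constructor].
Qed.

Lemma Qval_exists (f : X -> Defs.C) (M : R) :
  (forall l, NoDup l -> Qfin b c l f <= M) -> exists q, Qval b c f q.
Proof.
  intros H.
  destruct (completeness (fun v => exists l, NoDup l /\ v = Qfin b c l f)) as [q Hq].
  - exists M. intros v [l [Hl ->]]. auto.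
  - exists (Qfin b c [] f), []. split; [constructor | reflexivity].
  - exists q. exact Hq.
Qed.

Lemma energy_inD (u : X -> R) (M : R) : energy_le u M -> inD b c (emb u).
Proof.
  intros H. apply (Qval_exists (emb u) M).
  intros l Hl. rewrite Qfin_emb. auto.
Qed.

Lemma Qval_scale (f : X -> Defs.C) (q t : R) :
  Qval b c f q -> Qval b c (scale t f) (t² * q).
Proof.
  intros Hq. split.
  - intros v [l [Hl ->]]. rewrite Qfin_scale.
    apply Rmult_le_compat_l; [apply Rle_0_sqr | apply Qval_ub; auto].
  - intros w Hw.
    assert (Hw0 : 0 <= w).
    { apply Hw. exists []. split; [constructor | unfold Qfin; simpl; ring]. }
    destruct (Req_dec t 0) as [->|Ht]; [rewrite Rsqr_0; lra|].
    pose proof (Rsqr_pos_lt t Ht) as Ht2.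
    assert (Hqw : q <= / t² * w).
    { apply Hq. intros v [l [Hl ->]].
      assert (Hv : t² * Qfin b c l f <= w).
      { rewrite <- Qfin_scale. apply Hw. exists l; auto. }
      apply (Rmult_le_reg_l t²); auto. rewrite <- Rmult_assoc, Rinv_r, Rmult_1_l; lra. }
    apply (Rmult_le_compat_l t²) in Hqw; [|lra].
    rewrite <- Rmult_assoc, Rinv_r, Rmult_1_l in Hqw; lra.
Qed.

Lemma Qre_no_killing (l : list X) (u : X -> R) :
  (forall x, c x = 0) ->
  Qre l u = / 2 * lsum l (fun x => lsum l (fun y => b x y * (u x - u y)²)).
Proof.
  intros Hc0. unfold Qre.
  rewrite (lsum_ext l (fun x => c x * _) (fun _ => 0)), lsum_zero by (intros; rewrite Hc0; ring).
  ring.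
Qed.

Lemma energy_shift (u : X -> R) (M k : R) :
  (forall x, c x = 0) -> energy_le u M -> energy_le (fun x => u x - k) M.
Proof.
  intros Hc0 H l Hl. specialize (H l Hl). rewrite Qre_no_killing in * by auto.
  erewrite lsum_ext; [exact H|]. intros x _. apply lsum_ext. intros y _.
  f_equal. f_equal. ring.
Qed.

Hypothesis b_nonneg : forall x y, 0 <= b x y.
Hypothesis c_nonneg : forall x, 0 <= c x.

Lemma Qre_nonneg (l : list X) (u : X -> R) : 0 <= Qre l u.
Proof.
  unfold Qre. apply Rplus_le_le_0_compat.
  - apply Rmult_le_pos; [lra|]. apply lsum_nonneg; intros; apply lsum_nonneg; intros.
    apply Rmult_le_pos; [auto | apply Rle_0_sqr].
  - apply lsum_nonneg; intros. apply Rmult_le_pos; [auto | apply Rle_0_sqr].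
Qed.

Lemma Qval_fst (f : X -> Defs.C) (q : R) :
  Qval b c f q -> energy_le (fun x => fst (f x)) q.
Proof.
  intros Hq l Hl. pose proof (Qval_ub f q l Hq Hl). rewrite Qfin_split in H.
  pose proof (Qre_nonneg l (fun x => snd (f x))). lra.
Qed.

Lemma Qval_snd (f : X -> Defs.C) (q : R) :
  Qval b c f q -> energy_le (fun x => snd (f x)) q.
Proof.
  intros Hq l Hl. pose proof (Qval_ub f q l Hq Hl). rewrite Qfin_split in H.
  pose proof (Qre_nonneg l (fun x => fst (f x))). lra.
Qed.

Lemma Qre_contraction (l : list X) (u v : X -> R) :
  (forall x y, (v x - v y)² <= (u x - u y)²) -> (forall x, (v x)² <= (u x)²) ->
  Qre l v <= Qre l u.
Proof.
  intros Hd Hp. unfold Qre. apply Rplus_le_compat.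
  - apply Rmult_le_compat_l; [lra|].
    apply lsum_le; intros x _; apply lsum_le; intros y _.
    apply Rmult_le_compat_l; auto.
  - apply lsum_le; intros x _. apply Rmult_le_compat_l; auto.
Qed.

Lemma energy_abs (u : X -> R) (M : R) :
  energy_le u M -> energy_le (fun x => Rabs (u x)) M.
Proof.
  intros H l Hl. eapply Rle_trans; [|apply (H l Hl)].
  apply Qre_contraction.
  - intros x y. apply Rsqr_le_abs_1, Rabs_triang_inv2.
  - intros x. rewrite <- Rsqr_abs. lra.
Qed.

Lemma edge_energy (u : X -> R) (M : R) (x y : X) :
  x <> y -> b x y = b y x -> energy_le u M -> b x y * (u x - u y)² <= M.
Proof.
  intros Hxy Hsym H.
  assert (Hnd : NoDup [x; y]) by (repeat constructor; simpl; intuition).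
  eapply Rle_trans; [|apply (H _ Hnd)]. unfold Qre; simpl.
  replace (u y - u x)² with (u x - u y)² by (unfold Rsqr; ring).
  rewrite Rminus_diag, Rminus_diag, Rsqr_0, <- Hsym.
  pose proof (Rmult_le_pos _ _ (c_nonneg x) (Rle_0_sqr (u x))).
  pose proof (Rmult_le_pos _ _ (c_nonneg y) (Rle_0_sqr (u y))). lra.
Qed.

Lemma vertex_energy (u : X -> R) (M : R) (x : X) :
  b x x = 0 -> energy_le u M -> c x * (u x)² <= M.
Proof.
  intros Hxx H. assert (Hnd : NoDup [x]) by (repeat constructor; simpl; auto).
  eapply Rle_trans; [|apply (H _ Hnd)]. unfold Qre; simpl. rewrite Hxx. lra.
Qed.

End Energy.

Section ResistanceBounds.
Context {X : Type} (b : X -> X -> R) (c : X -> R).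

(* A bound on rho(x,y) bounds the oscillation of any finite-energy function,
   by homogeneity of the energy. *)
Lemma rho_scaling (x y : X) (K : R) (f : X -> Defs.C) (q : R) :
  rho_le b c x y K -> Qval b c f q -> Cabs (Csub (f x) (f y)) <= K * sqrt q.
Proof.
  intros HK Hq. set (d := Cabs (Csub (f x) (f y))).
  assert (Hd0 : 0 <= d) by apply sqrt_pos.
  assert (Hscaled : forall t, 0 < t -> t² * q <= 1 -> t * d <= K).
  { intros t Ht Htq. pose proof (HK _ _ (Qval_scale b c f q t Hq) Htq) as H.
    rewrite Cabs_sub_scale, Rabs_right in H by lra. exact H. }
  pose proof (Qval_nonneg b c f q Hq) as Hq0.
  destruct (Req_dec q 0) as [->|Hqn].
  - rewrite sqrt_0, Rmult_0_r. apply Rnot_lt_le. intros Hd.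
    assert (Ht : 0 < (Rabs K + 1) / d) by (apply Rdiv_lt_0_compat; [pose proof (Rabs_pos K)|]; lra).
    specialize (Hscaled _ Ht ltac:(rewrite Rmult_0_r; lra)).
    replace ((Rabs K + 1) / d * d) with (Rabs K + 1) in Hscaled by (field; lra).
    pose proof (Rle_abs K). lra.
  - assert (Hs : 0 < sqrt q) by (apply sqrt_lt_R0; lra).
    assert (Ht : 0 < / sqrt q) by (apply Rinv_0_lt_compat; auto).
    assert (Hnorm : (/ sqrt q)² * q = 1).
    { unfold Rsqr. rewrite <- (sqrt_sqrt q) at 3 by lra. field. lra. }
    specialize (Hscaled _ Ht (Req_le _ _ Hnorm)).
    replace d with (sqrt q * (/ sqrt q * d)) by (field; lra).
    rewrite (Rmult_comm K). apply Rmult_le_compat_l; lra.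
Qed.

Lemma r_scaling (x y : X) (K : R) (f : X -> Defs.C) (q : R) :
  x <> y -> 0 <= K -> r_le b c x y K -> Qval b c f q -> (Cabs (Csub (f x) (f y)))² <= K * q.
Proof.
  intros Hxy HK0 HK Hq. set (d := Cabs (Csub (f x) (f y))).
  assert (Hd0 : 0 <= d) by apply sqrt_pos.
  pose proof (Qval_nonneg b c f q Hq) as Hq0.
  destruct (Req_dec d 0) as [->|Hdn]; [rewrite Rsqr_0; apply Rmult_le_pos; auto|].
  assert (Hunit : Cabs (Csub (scale (/ d) f x) (scale (/ d) f y)) = 1).
  { rewrite Cabs_sub_scale, Rabs_right; fold d; [field; lra|].
    left; apply Rinv_0_lt_compat; lra. }
  destruct (proj2 HK Hxy _ _ (Qval_scale b c f q (/ d) Hq) Hunit) as [Hpos Hinv].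
  assert (Hqp : 0 < q) by (destruct (Req_dec q 0) as [->|]; [rewrite Rmult_0_r in Hpos|]; lra).
  replace (/ ((/ d)² * q)) with (d² / q) in Hinv by (unfold Rsqr; field; lra).
  apply (Rmult_le_compat_r q) in Hinv; [|lra].
  replace (d² / q * q) with d² in Hinv by (field; lra). exact Hinv.
Qed.

Lemma rho_bounded_r_bounded :
  (exists K, forall x y : X, rho_le b c x y K) -> exists K, forall x y : X, r_le b c x y K.
Proof.
  intros [K HK]. exists K². intros x y. split; [intros _; apply Rle_0_sqr|].
  intros Hxy g q Hq Hunit.
  pose proof (rho_scaling x y K g q (HK x y) Hq) as Hosc. rewrite Hunit in Hosc.
  pose proof (Qval_nonneg b c g q Hq) as Hq0.
  assert (Hqp : 0 < q).
  { destruct (Req_dec q 0) as [->|]; [rewrite sqrt_0 in Hosc|]; lra. }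
  split; auto.
  assert (H1 : 1 <= K² * q).
  { rewrite <- (sqrt_sqrt q) by lra. pose proof (sqrt_pos q).
    unfold Rsqr. nra. }
  apply (Rmult_le_reg_r q); auto. rewrite Rinv_l; lra.
Qed.

(* (iii) => (ii); the base point [o] provides K >= 0. *)
Lemma r_bounded_rho_bounded (o : X) :
  (exists K, forall x y : X, r_le b c x y K) -> exists K, forall x y : X, rho_le b c x y K.
Proof.
  intros [K HK]. assert (HK0 : 0 <= K) by (apply (proj1 (HK o o)); auto).
  exists (K + 1). intros x y f q Hq Hq1.
  destruct (classic (x = y)) as [->|Hxy].
  - unfold Csub. rewrite !Rminus_diag, Cabs_real, Rabs_R0. lra.
  - pose proof (r_scaling x y K f q Hxy HK0 (HK x y) Hq) as Hsq.
    pose proof (Qval_nonneg b c f q Hq).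
    apply Rsqr_incr_0_var; [|lra]. unfold Rsqr in *. nra.
Qed.

(* Bounded rho implies that every finite-energy function is bounded: it stays
   within K sqrt(Q(f)) of its value at a base point. *)
Lemma rho_bounded_compactifiable (o : X) :
  (exists K, forall x y : X, rho_le b c x y K) -> canonically_compactifiable b c.
Proof.
  intros [K HK] f [q Hq]. set (B := K * sqrt q).
  exists (Rabs (fst (f o)) + Rabs (snd (f o)) + 2 * B). intros x.
  pose proof (rho_scaling x o K f q (HK x o) Hq) as Hosc. fold B in Hosc.
  destruct (Cabs_ge_components (Csub (f x) (f o))) as [H1 H2]. unfold Csub in *; simpl in H1, H2.
  pose proof (Cabs_le_sum (f x)).
  pose proof (Rabs_triang (fst (f x) - fst (f o)) (fst (f o))).
  pose proof (Rabs_triang (snd (f x) - snd (f o)) (snd (f o))).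
  replace (fst (f x) - fst (f o) + fst (f o)) with (fst (f x)) in * by ring.
  replace (snd (f x) - snd (f o) + snd (f o)) with (snd (f x)) in * by ring.
  lra.
Qed.

End ResistanceBounds.

Section Connectivity.
Context {X : Type} (b : X -> X -> R) (c : X -> R).
Hypothesis graph : weighted_graph b c.

Lemma edge_oscillation (u : X -> R) (x y : X) :
  0 < b x y -> energy_le b c u 1 -> Rabs (u x - u y) <= sqrt (/ b x y).
Proof.
  destruct graph as [Hb [Hsym [Hdiag [_ Hc]]]]. intros Hxy Hu.
  assert (Hne : x <> y) by (intros ->; rewrite Hdiag in Hxy; lra).
  pose proof (edge_energy b c Hc u 1 x y Hne (Hsym x y) Hu) as He.
  rewrite <- (Rabs_right (sqrt _)) by (apply Rle_ge, sqrt_pos).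
  apply Rsqr_le_abs_0. rewrite Rsqr_sqrt by (left; apply Rinv_0_lt_compat; auto).
  apply (Rmult_le_reg_l (b x y)); auto. rewrite Rinv_r; lra.
Qed.

Lemma last_cons_default (l : list X) (a d1 d2 : X) : last (a :: l) d1 = last (a :: l) d2.
Proof.
  revert a. induction l as [|y l IH]; intros a; [reflexivity|].
  change (last (y :: l) d1 = last (y :: l) d2). apply IH.
Qed.

Lemma chain_oscillation (p : list X) (x : X) :
  chain b x p ->
  exists C, forall u, energy_le b c u 1 -> Rabs (u x - u (last (x :: p) x)) <= C.
Proof.
  revert x. induction p as [|y p IH]; intros x Hch.
  - exists 0. intros u _. simpl. rewrite Rminus_diag, Rabs_R0. lra.
  - destruct Hch as [Hxy Hch]. destruct (IH y Hch) as [C HC].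
    exists (sqrt (/ b x y) + C). intros u Hu.
    replace (last (x :: y :: p) x) with (last (y :: p) y) by exact (last_cons_default p y y x).
    pose proof (edge_oscillation u x y Hxy Hu). specialize (HC u Hu).
    pose proof (Rabs_triang (u x - u y) (u y - u (last (y :: p) y))).
    replace (u x - u y + (u y - u (last (y :: p) y))) with (u x - u (last (y :: p) y)) in * by ring.
    lra.
Qed.

Lemma connected_oscillation (o x : X) :
  connected b -> exists C, forall u, energy_le b c u 1 -> Rabs (u x - u o) <= C.
Proof.
  intros Hconn. destruct (classic (x = o)) as [->|Hne].
  - exists 0. intros. rewrite Rminus_diag, Rabs_R0. lra.
  - destruct (Hconn o x (fun e => Hne (eq_sym e))) as [p [_ [Hch Hlast]]].
    destruct (chain_oscillation p o Hch) as [C HC]. exists C. intros u Hu.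
    rewrite <- Hlast, Rabs_minus_sym. auto.
Qed.

End Connectivity.

Lemma sum_f_nonneg (a : nat -> R) N : (forall n, 0 <= a n) -> 0 <= sum_f_R0 a N.
Proof. intros H. induction N; simpl; auto. specialize (H (S N)). lra. Qed.

Lemma weighted_cauchy_schwarz (a d : nat -> R) N :
  (forall n, 0 <= a n) ->
  (sum_f_R0 (fun n => a n * d n) N)² <= sum_f_R0 a N * sum_f_R0 (fun n => a n * (d n)²) N.
Proof.
  intros Ha. unfold Rsqr. induction N as [|N IH]; simpl; [specialize (Ha O); nra|].
  set (A := sum_f_R0 a N) in *. set (T := sum_f_R0 (fun n => a n * d n) N) in *.
  set (U := sum_f_R0 (fun n => a n * (d n * d n)) N) in *.
  assert (HA0 : 0 <= A) by (apply sum_f_nonneg; auto).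
  assert (HU : 0 <= U) by (apply sum_f_nonneg; intros n; specialize (Ha n); nra).
  pose proof (Ha (S N)) as HaN. set (an := a (S N)) in *. set (dn := d (S N)).
  destruct (Req_dec A 0) as [HA|HA].
  - rewrite HA in IH. assert (T = 0) by nra. rewrite HA, H. nra.
  - assert (Hsq : 0 <= (A * dn - T) * (A * dn - T)) by apply Rle_0_sqr.
    assert (Hmid : 2 * dn * T <= A * (dn * dn) + U).
    { apply (Rmult_le_reg_l A); lra. }
    nra.
Qed.

Lemma weighted_jensen (a d : nat -> R) (g : R) N :
  (forall n, 0 <= a n) -> sum_f_R0 a N <= 1 -> 0 <= g ->
  g * (sum_f_R0 (fun n => a n * d n) N)² <= sum_f_R0 (fun n => a n * (g * (d n)²)) N.
Proof.
  intros Ha H1 Hg. pose proof (weighted_cauchy_schwarz a d N Ha) as HCS.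
  assert (HU : 0 <= sum_f_R0 (fun n => a n * (d n)²) N).
  { apply sum_f_nonneg. intros n. apply Rmult_le_pos; [auto | apply Rle_0_sqr]. }
  pose proof (sum_f_nonneg a N Ha).
  rewrite (sum_eq (fun n => a n * (g * (d n)²)) (fun n => a n * (d n)² * g)) by (intros; ring).
  rewrite <- scal_sum.
  apply Rmult_le_compat_l; [auto|]. nra.
Qed.

Section EnergyOfSeries.
Context {X : Type} (b : X -> X -> R) (c : X -> R).
Hypothesis b_nonneg : forall x y, 0 <= b x y.
Hypothesis c_nonneg : forall x, 0 <= c x.

Lemma Qre_convex (l : list X) (a : nat -> R) (w : nat -> X -> R) N :
  (forall n, 0 <= a n) -> sum_f_R0 a N <= 1 ->
  Qre b c l (fun x => sum_f_R0 (fun n => a n * w n x) N)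
  <= sum_f_R0 (fun n => a n * Qre b c l (w n)) N.
Proof.
  intros Ha H1.
  assert (Hsum : sum_f_R0 (fun n => a n * Qre b c l (w n)) N
    = / 2 * lsum l (fun x => lsum l (fun y => sum_f_R0 (fun n => a n * (b x y * (w n x - w n y)²)) N))
      + lsum l (fun x => sum_f_R0 (fun n => a n * (c x * (w n x)²)) N)).
  { rewrite <- (lsum_sum_f l a (fun n x => c x * (w n x)²)).
    rewrite (lsum_ext l (fun x => lsum l (fun y => sum_f_R0 _ N))
      (fun x => sum_f_R0 (fun n => a n * lsum l (fun y => b x y * (w n x - w n y)²)) N))
      by (intros x _; symmetry; apply (lsum_sum_f l a (fun n y => b x y * (w n x - w n y)²))).
    rewrite <- (lsum_sum_f l a (fun n x => lsum l (fun y => b x y * (w n x - w n y)²))).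
    unfold Qre. clear H1. induction N as [|N IH]; simpl; [ring|]. rewrite IH. ring. }
  rewrite Hsum. unfold Qre. apply Rplus_le_compat.
  - apply Rmult_le_compat_l; [lra|].
    apply lsum_le; intros x _; apply lsum_le; intros y _.
    rewrite <- minus_sum.
    rewrite (sum_eq (fun n => a n * w n x - a n * w n y) (fun n => a n * (w n x - w n y)))
      by (intros; ring).
    apply weighted_jensen; auto.
  - apply lsum_le; intros x _. apply weighted_jensen; auto.
Qed.

Lemma Qre_limit (l : list X) (u : nat -> X -> R) (F : X -> R) :
  (forall x, Un_cv (fun N => u N x) (F x)) -> Un_cv (fun N => Qre b c l (u N)) (Qre b c l F).
Proof.
  intros H. unfold Qre, Rsqr. apply CV_plus.
  - apply CV_mult; [apply Un_cv_const|].
    apply (lsum_cv l (fun N x => lsum l (fun y => b x y * ((u N x - u N y) * (u N x - u N y))))).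
    intros x. apply (lsum_cv l (fun N y => b x y * ((u N x - u N y) * (u N x - u N y)))).
    intros y. apply CV_mult; [apply Un_cv_const|]. apply CV_mult; apply CV_minus; auto.
  - apply (lsum_cv l (fun N x => c x * (u N x * u N x))).
    intros x. apply CV_mult; [apply Un_cv_const|]. apply CV_mult; auto.
Qed.

Lemma series_energy (a : nat -> R) (w : nat -> X -> R) (F : X -> R) :
  (forall n, 0 <= a n) -> (forall N, sum_f_R0 a N <= 1) ->
  (forall n, energy_le b c (w n) 1) ->
  (forall x, Un_cv (fun N => sum_f_R0 (fun n => a n * w n x) N) (F x)) ->
  energy_le b c F 1.
Proof.
  intros Ha H1 Hw HF l Hl. refine (Un_cv_le_bound _ _ _ _ (Qre_limit l _ F HF)).
  intros N. cbv beta. eapply Rle_trans; [apply Qre_convex; auto|].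
  eapply Rle_trans; [|apply (H1 N)]. apply sum_Rle. intros n _.
  pose proof (Hw n l Hl). pose proof (Ha n). nra.
Qed.

End EnergyOfSeries.

Section CompactifiableRhoBounded.
Context {X : Type} (b : X -> X -> R) (c : X -> R).
Hypothesis graph : weighted_graph b c.

(* rho is controlled by the oscillation of real unit-energy functions around a
   single base point (split a complex function into real and imaginary parts). *)
Lemma rho_bounded_of_real_bound (o : X) (K : R) :
  (forall u z, energy_le b c u 1 -> Rabs (u z - u o) <= K) ->
  forall x y, rho_le b c x y (4 * K).
Proof.
  destruct graph as [Hb [_ [_ [_ Hc]]]]. intros HK x y f q Hq Hq1.
  assert (Hosc : forall u, energy_le b c u 1 -> Rabs (u x - u y) <= 2 * K).
  { intros u Hu. pose proof (HK u x Hu). pose proof (HK u y Hu).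
    pose proof (Rabs_triang (u x - u o) (u o - u y)). rewrite (Rabs_minus_sym (u o)) in *.
    replace (u x - u o + (u o - u y)) with (u x - u y) in * by ring. lra. }
  assert (Hre : energy_le b c (fun z => fst (f z)) 1)
    by (intros l Hl; pose proof (Qval_fst b c Hb Hc f q Hq l Hl); lra).
  assert (Him : energy_le b c (fun z => snd (f z)) 1)
    by (intros l Hl; pose proof (Qval_snd b c Hb Hc f q Hq l Hl); lra).
  pose proof (Cabs_le_sum (Csub (f x) (f y))).
  pose proof (Hosc _ Hre). pose proof (Hosc _ Him). simpl in *. lra.
Qed.

Lemma real_witnesses :
  ~ (exists K, forall x y : X, rho_le b c x y K) ->
  forall o K, exists u z, energy_le b c u 1 /\ K < Rabs (u z - u o).
Proof.
  intros Hn o K. apply NNPP. intros Hno. apply Hn. exists (4 * K).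
  apply (rho_bounded_of_real_bound o). intros u z Hu.
  apply Rnot_lt_le. intros Hlt. apply Hno. eauto.
Qed.

(* Witnesses can be taken nonnegative and bounded at a common base point: use
   |u| if some vertex o is killed (then u(o)^2 <= 1/c(o)), and |u - u(o)|
   otherwise (then the energy is invariant under shifts). *)
Lemma normalized_witnesses (o0 : X) :
  (forall o K, exists u z, energy_le b c u 1 /\ K < Rabs (u z - u o)) ->
  exists o A, forall K, exists w z,
    (forall x, 0 <= w x) /\ energy_le b c w 1 /\ w o <= A /\ K < w z.
Proof.
  destruct graph as [Hb [_ [Hdiag [_ Hc]]]]. intros Hwit.
  destruct (classic (exists o, 0 < c o)) as [[o Ho]|Hno].
  - exists o, (sqrt (/ c o)). intros K.
    destruct (Hwit o (K + sqrt (/ c o))) as [u [z [Hu Hlt]]].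
    exists (fun x => Rabs (u x)), z.
    split; [intros; apply Rabs_pos|]. split; [apply energy_abs; auto|].
    assert (Huo : Rabs (u o) <= sqrt (/ c o)).
    { pose proof (vertex_energy b c u 1 o (Hdiag o) Hu).
      rewrite <- (Rabs_right (sqrt _)) by (apply Rle_ge, sqrt_pos).
      apply Rsqr_le_abs_0. rewrite Rsqr_sqrt by (left; apply Rinv_0_lt_compat; auto).
      apply (Rmult_le_reg_l (c o)); auto. rewrite Rinv_r; lra. }
    split; auto.
    pose proof (Rabs_triang (u z) (- u o)). rewrite Rabs_Ropp in *. unfold Rminus in Hlt. lra.
  - assert (Hc0 : forall x, c x = 0).
    { intros x. destruct (Hc x) as [Hp|]; auto. exfalso; apply Hno; eauto. }
    exists o0, 0. intros K. destruct (Hwit o0 K) as [u [z [Hu Hlt]]].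
    exists (fun x => Rabs (u x - u o0)), z.
    split; [intros; apply Rabs_pos|].
    split; [apply energy_abs, energy_shift; auto|].
    split; auto. rewrite Rminus_diag, Rabs_R0. lra.
Qed.

Lemma geometric_weights N : sum_f_R0 (fun n => / 2 ^ S n) N = 1 - / 2 ^ S N.
Proof.
  induction N as [|N IH]; [simpl; field|].
  rewrite tech5, IH. pose proof (pow_lt 2 (S N) ltac:(lra)).
  change (2 ^ S (S N)) with (2 * 2 ^ S N). field. lra.
Qed.

Lemma weighted_series_converges (o : X) (A : R) (a : nat -> R) (w : nat -> X -> R) :
  connected b ->
  (forall n, 0 <= a n) -> (forall N, sum_f_R0 a N <= 1) ->
  (forall n x, 0 <= w n x) -> (forall n, energy_le b c (w n) 1) -> (forall n, w n o <= A) ->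
  exists F : X -> R, forall x, Un_cv (fun N => sum_f_R0 (fun n => a n * w n x) N) (F x).
Proof.
  intros Hconn Ha Ha1 Hw0 Hw1 HwA. apply monotone_limit.
  - intros x N. rewrite tech5. pose proof (Rmult_le_pos _ _ (Ha (S N)) (Hw0 (S N) x)). lra.
  - intros x. destruct (connected_oscillation b c graph o x Hconn) as [Cx HC].
    assert (Hterm : forall n, w n x <= A + Cx).
    { intros n. pose proof (HC _ (Hw1 n)). pose proof (HwA n).
      pose proof (Rle_abs (w n x - w n o)). lra. }
    exists (A + Cx). intros v [N ->].
    apply Rle_trans with (sum_f_R0 (fun n => a n * (A + Cx)) N).
    + apply sum_Rle. intros n _. apply Rmult_le_compat_l; auto.
    + rewrite <- scal_sum, Rmult_comm. pose proof (Hw0 O x). pose proof (Hterm O).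
      pose proof (Ha1 N). pose proof (sum_f_nonneg a N Ha). nra.
Qed.

(* The key construction: if w_n >= 0 have unit energy, are bounded at o, and
   w_n(z_n) > 2^(n+1) n, then F = sum_n 2^-(n+1) w_n has energy at most one
   and F(z_n) > n, so F is an unbounded function of finite energy. *)
Lemma unbounded_series (o : X) (A : R) (w : nat -> X -> R) (z : nat -> X) :
  connected b ->
  (forall n x, 0 <= w n x) -> (forall n, energy_le b c (w n) 1) ->
  (forall n, w n o <= A) -> (forall n, 2 ^ S n * INR n < w n (z n)) ->
  ~ canonically_compactifiable b c.
Proof.
  destruct graph as [Hb [_ [_ [_ Hc]]]].
  intros Hconn Hw0 Hw1 HwA Hwz Hcc.
  set (a := fun n : nat => / 2 ^ S n).
  assert (Hpow : forall n, 0 < 2 ^ S n) by (intros; apply pow_lt; lra).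
  assert (Ha : forall n, 0 <= a n) by (intros; left; apply Rinv_0_lt_compat; auto).
  assert (Ha1 : forall N, sum_f_R0 a N <= 1).
  { intros N. unfold a. rewrite geometric_weights.
    pose proof (Rinv_0_lt_compat _ (Hpow N)). lra. }
  destruct (weighted_series_converges o A a w Hconn Ha Ha1 Hw0 Hw1 HwA) as [F HF].
  pose proof (series_energy b c Hb Hc a w F Ha Ha1 Hw1 HF) as HFE.
  destruct (Hcc _ (energy_inD b c F 1 HFE)) as [M HM].
  destruct (INR_unbounded M) as [n Hn].
  specialize (HM (z n)). unfold emb in HM. rewrite Cabs_real in HM.
  assert (Hterms : forall k, 0 <= a k * w k (z n)) by (intros; apply Rmult_le_pos; auto).
  assert (Hlast : a n * w n (z n) <= F (z n)).
  { eapply Rle_trans; [|apply (sum_incr _ n _ (HF (z n)) Hterms)].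
    destruct n; simpl; [lra|]. pose proof (sum_f_nonneg _ n Hterms). lra. }
  assert (Hbig : INR n < a n * w n (z n)).
  { replace (INR n) with (a n * (2 ^ S n * INR n)) by (unfold a; field; specialize (Hpow n); lra).
    apply Rmult_lt_compat_l; [apply Rinv_0_lt_compat|]; auto. }
  pose proof (Rle_abs (F (z n))). lra.
Qed.

Lemma compactifiable_rho_bounded (o0 : X) :
  connected b -> canonically_compactifiable b c -> exists K, forall x y : X, rho_le b c x y K.
Proof.
  intros Hconn Hcc. apply NNPP. intros Hn.
  destruct (normalized_witnesses o0 (real_witnesses Hn)) as [o [A HA]].
  destruct (choice (fun (n : nat) (wz : (X -> R) * X) =>
      (forall x, 0 <= fst wz x) /\ energy_le b c (fst wz) 1 /\ fst wz o <= A
      /\ 2 ^ S n * INR n < fst wz (snd wz)))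
    as [wz Hwz].
  { intros n. destruct (HA (2 ^ S n * INR n)) as [w [z Hw]]. exists (w, z). exact Hw. }
  apply (unbounded_series o A (fun n => fst (wz n)) (fun n => snd (wz n))); auto;
    intros n; apply Hwz.
Qed.

End CompactifiableRhoBounded.

Section Enumerations.
Context {X : Type} (e : nat -> X).

Definition prefix (N : nat) : list X := map e (seq 0 (S N)).

Hypothesis e_injective : forall n m, e n = e m -> n = m.
Hypothesis e_surjective : forall x, exists n, e n = x.

Lemma prefix_NoDup N : NoDup (prefix N).
Proof.
  apply NoDup_map_NoDup_ForallPairs; [|apply seq_NoDup].
  intros n m _ _. apply e_injective.
Qed.

Lemma prefix_incl N N' : (N <= N')%nat -> incl (prefix N) (prefix N').
Proof.
  intros H x Hx. unfold prefix in *. rewrite in_map_iff in *.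
  destruct Hx as [k [Hk Hin]]. exists k. rewrite in_seq in *. split; [auto | lia].
Qed.

Lemma prefix_cover (l : list X) : exists N, incl l (prefix N).
Proof.
  induction l as [|a l [N HN]].
  - exists O. intros x [].
  - destruct (e_surjective a) as [k Hk]. exists (Nat.max N k). intros x [<-|Hx].
    + unfold prefix. apply in_map_iff. exists k. rewrite in_seq. split; [auto | lia].
    + apply (prefix_incl N); [lia | auto].
Qed.

Lemma prefix_limit_sum_bound (P : nat -> X -> R) (m : X -> R) (Q : R) :
  (forall N x, 0 <= P N x) -> (forall N N' x, (N <= N')%nat -> P N x <= P N' x) ->
  (forall x, Un_cv (fun N => P N x) (m x)) -> (forall N, lsum (prefix N) (P N) <= Q) ->
  forall L, NoDup L -> lsum L m <= Q.
Proof.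
  intros HP0 HPmono Hm HPQ L HL.
  assert (HPm : forall N x, P N x <= m x).
  { intros N x. apply (growing_ineq (fun N => P N x)); auto. intros k. apply HPmono. lia. }
  destruct (prefix_cover L) as [N HN].
  apply Rle_trans with (lsum (prefix N) m).
  { apply lsum_incl; auto. intros x. eapply Rle_trans; [apply (HP0 O x) | apply HPm]. }
  refine (Un_cv_le_bound _ _ _ _ (lsum_cv (prefix N) P m Hm)).
  intros N'. cbv beta.
  apply Rle_trans with (lsum (prefix (Nat.max N N')) (P (Nat.max N N'))); [|apply HPQ].
  apply Rle_trans with (lsum (prefix N) (P (Nat.max N N'))).
  - apply lsum_le. intros; apply HPmono; lia.
  - apply lsum_incl; [auto | apply prefix_NoDup | apply prefix_incl; lia].
Qed.

End Enumerations.

Section IntrinsicMetrics.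
Context {X : Type} (b : X -> X -> R) (c : X -> R).
Hypothesis graph : weighted_graph b c.
Hypothesis no_killing : forall x, c x = 0.

(* (i) => (iv): the distance to a base point of an intrinsic metric has
   energy at most m(X), hence is bounded. *)
Lemma compactifiable_intrinsic_bounded (o : X) :
  canonically_compactifiable b c ->
  forall (m : X -> R) (s : X -> X -> R),
    finite_measure m -> pseudometric s -> intrinsic b m s ->
    exists K, forall x y : X, s x y <= K.
Proof.
  destruct graph as [Hb _].
  intros Hcc m s [M HM] [Hs0 [_ [Hsym Htri]]] Hint.
  assert (Hu : energy_le b c (s o) M).
  { intros l Hl. rewrite Qre_no_killing by auto.
    eapply Rle_trans; [|apply (HM l Hl)].
    rewrite <- lsum_scal. apply lsum_le. intros x _.
    eapply Rle_trans; [|apply (Hint x l Hl)].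
    apply Rmult_le_compat_l; [lra|]. apply lsum_le. intros y _.
    apply Rmult_le_compat_l; auto. rewrite <- Rsqr_pow2. apply Rsqr_le_abs_1.
    rewrite (Rabs_right (s x y)) by (apply Rle_ge; auto).
    pose proof (Htri o x y); pose proof (Htri o y x); rewrite (Hsym y x) in *.
    apply Rabs_le. lra. }
  destruct (Hcc _ (energy_inD b c (s o) M Hu)) as [B HB].
  exists (2 * B). intros x y.
  pose proof (HB x) as Hx; pose proof (HB y) as Hy. unfold emb in Hx, Hy.
  rewrite Cabs_real in Hx, Hy. pose proof (Rle_abs (s o x)); pose proof (Rle_abs (s o y)).
  pose proof (Htri x o y). rewrite (Hsym x o) in *. lra.
Qed.

(* Conversely, a real function u of finite energy yields the intrinsic metric
   |u(x) - u(y)| for the finite measure m(x) = 1/2 sum_y b(x,y) (u x - u y)^2;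
   the sums over y are computed as monotone limits along an enumeration. *)
Lemma energy_intrinsic_measure (e : nat -> X) (u : X -> R) (Q : R) :
  (forall n m, e n = e m -> n = m) -> (forall x, exists n, e n = x) ->
  energy_le b c u Q ->
  exists m, measure m /\ finite_measure m /\ intrinsic b m (fun x y => Rabs (u x - u y)).
Proof.
  destruct graph as [Hb _]. intros Hinj Hsurj Hu.
  set (row := fun x y => b x y * (u x - u y)²).
  assert (Hrow : forall x y, 0 <= row x y) by (intros; apply Rmult_le_pos; [auto | apply Rle_0_sqr]).
  set (P := fun N x => / 2 * lsum (prefix e N) (row x)).
  assert (HP0 : forall N x, 0 <= P N x).
  { intros. apply Rmult_le_pos; [lra|]. apply lsum_nonneg; auto. }
  assert (HPmono : forall N N' x, (N <= N')%nat -> P N x <= P N' x).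
  { intros N N' x H. apply Rmult_le_compat_l; [lra|].
    apply lsum_incl; auto; [apply prefix_NoDup | apply prefix_incl]; auto. }
  assert (HPQ : forall N, lsum (prefix e N) (P N) <= Q).
  { intros N. pose proof (Hu _ (prefix_NoDup e Hinj N)) as H.
    rewrite Qre_no_killing, <- lsum_scal in H by auto. exact H. }
  assert (Hub : forall x, has_ub (fun N => P N x)).
  { intros x. destruct (prefix_cover e Hsurj [x]) as [N0 HN0].
    exists Q. intros v [N ->].
    apply Rle_trans with (P (Nat.max N N0) x); [apply HPmono; lia|].
    eapply Rle_trans; [|apply (HPQ (Nat.max N N0))].
    apply lsum_term_le; auto. apply (prefix_incl e N0); [lia | apply HN0; left; auto]. }
  destruct (monotone_limit P (fun x N => HPmono N (S N) x (Nat.le_succ_diag_r N)) Hub) as [m Hm].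
  assert (HPm : forall N x, P N x <= m x).
  { intros N x. apply (growing_ineq (fun N => P N x)); auto.
    intros k. apply HPmono. lia. }
  exists m. split; [|split].
  - intros x. eapply Rle_trans; [apply (HP0 O x) | apply HPm].
  - exists Q. apply (prefix_limit_sum_bound e Hinj Hsurj P m Q HP0 HPmono Hm HPQ).
  - intros x l Hl. destruct (prefix_cover e Hsurj l) as [N HN].
    eapply Rle_trans; [|apply (HPm N x)]. apply Rmult_le_compat_l; [lra|].
    apply Rle_trans with (lsum l (row x)).
    + apply Req_le, lsum_ext. intros y _. unfold row. rewrite <- Rsqr_pow2, <- Rsqr_abs. reflexivity.
    + apply lsum_incl; auto.
Qed.

(* (iv) => (i): apply (iv) to the metrics |u x - u y| built from the real and
   imaginary parts of a finite-energy function. *)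
Lemma intrinsic_bounded_compactifiable :
  countably_infinite X ->
  (forall (m : X -> R) (s : X -> X -> R),
    measure m -> finite_measure m -> pseudometric s -> intrinsic b m s ->
    exists K, forall x y : X, s x y <= K) ->
  canonically_compactifiable b c.
Proof.
  destruct graph as [Hb [_ [_ [_ Hc]]]].
  intros [e [Hinj Hsurj]] Hiv.
  assert (Hreal : forall u Q, energy_le b c u Q -> exists B, forall x, Rabs (u x) <= B).
  { intros u Q Hu.
    destruct (energy_intrinsic_measure e u Q Hinj Hsurj Hu) as [m [Hm [Hfin Hint]]].
    destruct (Hiv m (fun x y => Rabs (u x - u y)) Hm Hfin) as [K HK]; auto.
    - repeat split; intros.
      + apply Rabs_pos.
      + rewrite Rminus_diag, Rabs_R0; reflexivity.
      + apply Rabs_minus_sym.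
      + replace (u x - u z) with ((u x - u y) + (u y - u z)) by ring. apply Rabs_triang.
    - exists (Rabs (u (e O)) + K). intros x. specialize (HK x (e O)).
      pose proof (Rabs_triang (u x - u (e O)) (u (e O))).
      replace (u x - u (e O) + u (e O)) with (u x) in * by ring. lra. }
  intros f [q Hq].
  destruct (Hreal _ _ (Qval_fst b c Hb Hc f q Hq)) as [B1 H1].
  destruct (Hreal _ _ (Qval_snd b c Hb Hc f q Hq)) as [B2 H2].
  exists (B1 + B2). intros x. pose proof (Cabs_le_sum (f x)). specialize (H1 x); specialize (H2 x). lra.
Qed.

End IntrinsicMetrics.

Theorem mainTheorem7 (X : Type) (b : X -> X -> R) (c : X -> R)
  (HX : countably_infinite X) (Hg : weighted_graph b c) (Hconn : connected b) :
  (canonically_compactifiable b c <->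
     exists K, forall x y : X, rho_le b c x y K) /\
  ((exists K, forall x y : X, rho_le b c x y K) <->
     exists K, forall x y : X, r_le b c x y K) /\
  ((forall x, c x = 0) ->
     (canonically_compactifiable b c <->
        forall (m : X -> R) (s : X -> X -> R),
          measure m -> finite_measure m -> pseudometric s -> intrinsic b m s ->
          exists K, forall x y : X, s x y <= K)).
Proof.
  pose proof HX as [e _]. set (o := e O).
  split; [split|split; [split|]].
  - apply (compactifiable_rho_bounded b c Hg o Hconn).
  - apply (rho_bounded_compactifiable b c o).
  - apply rho_bounded_r_bounded.
  - apply (r_bounded_rho_bounded b c o).
  - intros Hc0. split.
    + intros Hcc m s _. apply (compactifiable_intrinsic_bounded b c Hg Hc0 o Hcc).
    + apply (intrinsic_bounded_compactifiable b c Hg Hc0 HX).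
Qed.
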